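(* (a) There is a unique action of the symmetric group $S_n$ on $\mathcal{X}$ by $\mathbf{k}$-algebra automorphisms such that $\sigma\cdot x_{i,j}=x_{\sigma(i),\sigma(j)}$ for all $\sigma\in S_n$ and all pairs $(i,j)$ of distinct elements of $[n]$. (b) The ideal $\mathcal{J}$ is invariant under this action, so the quotient $\mathbf{k}$-algebra $\mathcal{X}/\mathcal{J}$ inherits an action of $S_n$ by $\mathbf{k}$-algebra automorphisms.
   Context: Let $\mathbf{k}$ be a commutative ring, let $\beta,\alpha\in\mathbf{k}$, and let $n$ be a positive integer; $[n]=\{1,\dots,n\}$. Let $\mathcal{X}=\mathbf{k}[x_{i,j}\mid 1\le i<j\le n]$ be the polynomial ring in the indeterminates $x_{i,j}$, and $\mathcal{J}$ the ideal generated by all $x_{i,j}x_{j,k}-x_{i,k}(x_{i,j}+x_{j,k}+\beta)-\alpha$ for $1\le i<j<k\le n$. For $(i,j)\in[n]^2$ with $i>j$, define the element $x_{i,j}\in\mathcal{X}$ by $x_{i,j}=-\beta-x_{j,i}$ (so $x_{i,j}$ is defined for all pairs of distinct $i,j\in[n]$). $S_n$ is the group of permutations of $[n]$. *)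

From HB Require Import structures.
From mathcomp Require Import all_boot all_order all_algebra all_fingroup.
Set Implicit Arguments. Unset Strict Implicit. Unset Printing Implicit Defensive.
Import GRing.Theory.
Local Open Scope ring_scope.

(* Multivariate polynomial ring R[X_0, ..., X_(m-1)] built as the iterated
   univariate polynomial ring  R[X_0][X_1]...[X_(m-1)]. *)
Fixpoint mpoly (R : comNzRingType) (m : nat) : comNzRingType :=
  if m is m'.+1 then {poly (mpoly R m')} else R.

Fixpoint mconst (R : comNzRingType) (m : nat) : R -> mpoly R m :=
  match m return R -> mpoly R m with
  | 0 => fun c => c
  | m'.+1 => fun c => (mconst m' c)%:P
  end.

(* The indeterminate X_t (t < m); junk value 0 when t >= m. *)
Fixpoint mvar (R : comNzRingType) (m : nat) (t : nat) : mpoly R m :=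
  match m return mpoly R m with
  | 0 => 0
  | m'.+1 => if t == m' then 'X else (mvar R m' t)%:P
  end.

Definition polyV (R : comNzRingType) (V : finType) : comNzRingType :=
  mpoly R #|V|.
Definition polyV_const (R : comNzRingType) (V : finType) (c : R) : polyV R V :=
  mconst #|V| c.
Definition polyV_var (R : comNzRingType) (V : finType) (v : V) : polyV R V :=
  mvar R #|V| (enum_rank v).

Definition upair (n : nat) := {p : 'I_n * 'I_n | (p.1 < p.2)%N}.

Definition Xring (k : comNzRingType) (n : nat) : comNzRingType :=
  polyV k (upair n).

Definition Xconst (k : comNzRingType) (n : nat) (c : k) : Xring k n :=
  polyV_const (upair n) c.

(* The indeterminate x_{i,j} for i < j (junk value 0 if not i < j). *)
Definition xvar (k : comNzRingType) (n : nat) (i j : 'I_n) : Xring k n :=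
  if @insub _ (fun p : 'I_n * 'I_n => (p.1 < p.2)%N) (upair n) (i, j) is Some p
  then @polyV_var k (upair n) p else 0.

(* x_{i,j} for all i,j : 'I_n ; for i > j it is -beta - x_{j,i};
   for i = j it is a junk value 0 (never used). *)
Definition xx (k : comNzRingType) (n : nat) (beta : k) (i j : 'I_n) : Xring k n :=
  if (i < j)%N then xvar k i j
  else if (j < i)%N then - Xconst n beta - xvar k j i
  else 0.

Definition Jgen (k : comNzRingType) (n : nat) (beta alpha : k)
  (i j l : 'I_n) : Xring k n :=
  xx beta i j * xx beta j l
  - xx beta i l * (xx beta i j + xx beta j l + Xconst n beta) - Xconst n alpha.

Definition inJ (k : comNzRingType) (n : nat) (beta alpha : k) (p : Xring k n) : Prop :=
  exists c : 'I_n -> 'I_n -> 'I_n -> Xring k n,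
    p = \sum_(i < n) \sum_(j < n) \sum_(l < n)
          (if (i < j)%N && (j < l)%N then c i j l * Jgen beta alpha i j l else 0).

(* f is a k-algebra endomorphism of X (k-linear unital ring morphism;
   k-linearity of a ring morphism = fixing the constants). *)
Definition kalg_endo (k : comNzRingType) (n : nat) (f : Xring k n -> Xring k n) : Prop :=
  [/\ forall a b, f (a + b) = f a + f b,
      forall a b, f (a * b) = f a * f b,
      f 1 = 1 &
      forall c : k, f (Xconst n c) = Xconst n c].

(* act is an action of S_n on X by k-algebra automorphisms.  Note that in
   MathComp (s * t) x = t (s x), i.e. s * t is "t after s". *)
Definition is_Sn_kalg_action (k : comNzRingType) (n : nat)
  (act : {perm 'I_n} -> Xring k n -> Xring k n) : Prop :=
  [/\ forall s, kalg_endo (act s),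
      forall s, bijective (act s),
      forall p, act 1%g p = p &
      forall s t p, act (s * t)%g p = act t (act s p)].

From HB Require Import structures.
From mathcomp Require Import all_boot all_order all_algebra all_fingroup.
From mathcomp Require Import ring.
Import GRing.Theory.
Set Implicit Arguments. Unset Strict Implicit.
Local Open Scope ring_scope.

(* Since X is a polynomial ring, a ring morphism out of X is freely and
   uniquely determined by its values on the constants and on the variables
   x_{i,j}, i < j.  Sending x_{i,j} to x_{s i, s j} extends to x_{j,i} =
   -beta - x_{i,j}, and uniqueness gives both the action laws and the
   uniqueness claim.  Each generator of J is mapped to the generator
   Jgen (s i) (s j) (s l); as Jgen is symmetric under exchanging two of its
   (distinct) indices, that element lies in J after sorting the indices. *)

Section MpolyUniversalProperty.
Variable R : comNzRingType.

Fixpoint mconst_rmorphism (m : nat) : {rmorphism R -> mpoly R m} :=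
  match m return {rmorphism R -> mpoly R m} with
  | 0 => idfun
  | m'.+1 => (polyC : {rmorphism mpoly R m' -> {poly mpoly R m'}})
             \o mconst_rmorphism m'
  end.

Lemma mconst_rmorphismE m c : mconst_rmorphism m c = mconst m c.
Proof. by elim: m => //= m ->. Qed.

Variables (S : comNzRingType) (f : {rmorphism R -> S}) (v : nat -> S).

Fixpoint meval (m : nat) : {rmorphism mpoly R m -> S} :=
  match m return {rmorphism mpoly R m -> S} with
  | 0 => f
  | m'.+1 => (horner_eval (v m') : {rmorphism {poly S} -> S})
             \o (map_poly (meval m') : {rmorphism {poly mpoly R m'} -> {poly S}})
  end.

Lemma meval_mconst m c : meval m (mconst m c) = f c.
Proof. by elim: m => //= m IH; rewrite horner_evalE map_polyC hornerC. Qed.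

Lemma meval_mvar m t : (t < m)%N -> meval m (mvar R m t) = v t.
Proof.
elim: m => //= m IH; rewrite ltnS leq_eqVlt => /orP[/eqP->|lt_tm].
  by rewrite horner_evalE eqxx map_polyX hornerX.
by rewrite horner_evalE (ltn_eqF lt_tm) map_polyC hornerC; apply: IH.
Qed.

End MpolyUniversalProperty.

Lemma mpoly_rmorph_eq (R S : comNzRingType) m (g h : {rmorphism mpoly R m -> S}) :
  (forall c, g (mconst m c) = h (mconst m c)) ->
  (forall t, (t < m)%N -> g (mvar R m t) = h (mvar R m t)) ->
  g =1 h.
Proof.
elim: m g h => [|m IH] g h eq_const eq_var p; first exact: eq_const.
have eq_polyC (q : mpoly R m) : g q%:P = h q%:P.
  apply: (IH (g \o polyC) (h \o polyC)) => [c|t lt_tm] /=; first exact: eq_const.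
  by have := eq_var t (ltnW lt_tm); rewrite /= (ltn_eqF lt_tm).
have eq_X : g 'X = h 'X by have := eq_var m (ltnSn m); rewrite /= eqxx.
rewrite -[p](coefK (p : {poly mpoly R m})) poly_def !rmorph_sum.
by apply: eq_bigr => i _; rewrite -mul_polyC !rmorphM !rmorphXn /= eq_polyC eq_X.
Qed.

Section Ideal.
Variables (k : comNzRingType) (beta alpha : k) (n : nat).
Local Notation inJ := (@inJ k n beta alpha).
Local Notation Jgen := (Jgen beta alpha).

Lemma inJ0 : inJ 0.
Proof.
exists (fun _ _ _ => 0); rewrite big1 // => i _; rewrite big1 // => j _.
by rewrite big1 // => l _; rewrite mul0r if_same.
Qed.

Lemma inJD p q : inJ p -> inJ q -> inJ (p + q).
Proof.
move=> [c ->] [d ->]; exists (fun i j l => c i j l + d i j l).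
rewrite -big_split; apply: eq_bigr => i _; rewrite -big_split.
apply: eq_bigr => j _; rewrite -big_split; apply: eq_bigr => l _.
by case: ifP => _; [exact: esym (mulrDl _ _ _) | exact: addr0].
Qed.

Lemma inJ_sum (I : Type) (r : seq I) (P : pred I) (F : I -> Xring k n) :
  (forall i, P i -> inJ (F i)) -> inJ (\sum_(i <- r | P i) F i).
Proof. by move=> JF; apply: big_ind => //; [exact: inJ0 | exact: inJD]. Qed.

Lemma inJMl q p : inJ p -> inJ (q * p).
Proof.
move=> [c ->]; exists (fun i j l => q * c i j l).
rewrite mulr_sumr; apply: eq_bigr => i _; rewrite mulr_sumr.
apply: eq_bigr => j _; rewrite mulr_sumr; apply: eq_bigr => l _.
by case: ifP; rewrite ?mulrA ?mulr0.
Qed.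

Lemma inJ_Jgen_sorted (i j l : 'I_n) : (i < j < l)%N -> inJ (Jgen i j l).
Proof.
move=> ijl; exists (fun a b d => ((a == i) && (b == j) && (d == l))%:R).
rewrite (bigD1 i) //= (bigD1 j) //= (bigD1 l) //= !eqxx ijl mul1r.
rewrite big1 ?addr0 => [|d /negbTE ->]; last by rewrite andbF mul0r if_same.
rewrite big1 ?addr0 => [|b /negbTE neq_b]; last first.
  by rewrite big1 // => d _; rewrite neq_b andbF mul0r if_same.
rewrite big1 ?addr0 // => a /negbTE neq_a.
by rewrite big1 // => b _; rewrite big1 // => d _; rewrite neq_a mul0r if_same.
Qed.

Lemma xx_swap (i j : 'I_n) : i != j -> xx beta j i = - Xconst n beta - xx beta i j.
Proof.
rewrite /xx neq_ltn; case: ltngtP => // _ _; ring.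
Qed.

Lemma Jgen_swap12 (i j l : 'I_n) : i != j -> Jgen j i l = Jgen i j l.
Proof. by move=> /xx_swap xx_ji; rewrite /Jgen xx_ji; ring. Qed.

Lemma Jgen_swap23 (i j l : 'I_n) : j != l -> Jgen i l j = Jgen i j l.
Proof. by move=> /xx_swap xx_lj; rewrite /Jgen xx_lj; ring. Qed.

Lemma inJ_Jgen (i j l : 'I_n) : i != j -> j != l -> i != l -> inJ (Jgen i j l).
Proof.
move=> ne_ij ne_jl ne_il.
wlog lt_ij : i j ne_ij ne_jl ne_il / (i < j)%N => [sorted_ij|].
  move: (ne_ij); rewrite neq_ltn => /orP[lt_ij|lt_ji]; first exact: sorted_ij.
  by rewrite -Jgen_swap12 //; apply: sorted_ij; rewrite // eq_sym.
move: (ne_jl); rewrite neq_ltn => /orP[lt_jl|lt_lj].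
  by apply: inJ_Jgen_sorted; rewrite lt_ij.
rewrite -Jgen_swap23 //; move: ne_il; rewrite neq_ltn => /orP[lt_il|lt_li].
  by apply: inJ_Jgen_sorted; rewrite lt_il.
rewrite -Jgen_swap12; last by rewrite neq_ltn lt_li orbT.
by apply: inJ_Jgen_sorted; rewrite lt_li.
Qed.

End Ideal.

Section PermutationAction.
Variables (k : comNzRingType) (beta : k) (n : nat).
Local Notation M := #|{: upair n}|.
Local Notation XR := (Xring k n).

Lemma xx_upair (p : upair n) : xx beta (val p).1 (val p).2 = mvar k M (enum_rank p).
Proof. by rewrite /xx (valP p) /xvar -surjective_pairing valK. Qed.

(* The variable [mvar t] is x_{i,j} for the [t]-th pair (i, j) of [upair n]. *)
Definition perm_var_image (s : {perm 'I_n}) (t : nat) : XR :=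
  if insub t : option 'I_M is Some o then
    let p := val (enum_val o) in xx beta (s p.1) (s p.2)
  else 0.

Definition Xact (s : {perm 'I_n}) : {rmorphism XR -> XR} :=
  meval (mconst_rmorphism k M) (perm_var_image s) M.

Lemma Xact_const s c : Xact s (Xconst n c) = Xconst n c.
Proof. by rewrite /Xact meval_mconst mconst_rmorphismE. Qed.

Lemma Xring_rmorph_eq (g h : {rmorphism XR -> XR}) :
  (forall c, g (Xconst n c) = h (Xconst n c)) ->
  (forall i j : 'I_n, (i < j)%N -> g (xx beta i j) = h (xx beta i j)) ->
  g =1 h.
Proof.
move=> eq_const eq_xx; apply: mpoly_rmorph_eq => [c|t lt_tM]; first exact: eq_const.
pose o : 'I_M := Ordinal lt_tM.
have -> : t = enum_rank (enum_val o) by rewrite enum_valK.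
by rewrite -xx_upair; apply/eq_xx/(valP (enum_val o)).
Qed.

Lemma Xact_xx s (i j : 'I_n) : i != j -> Xact s (xx beta i j) = xx beta (s i) (s j).
Proof.
have Xact_xx_sorted (a b : 'I_n) : (a < b)%N -> Xact s (xx beta a b) = xx beta (s a) (s b).
  move=> lt_ab; rewrite (xx_upair (exist _ (a, b) lt_ab)) /Xact meval_mvar //.
  by rewrite /perm_var_image valK enum_rankK.
rewrite neq_ltn => /orP[lt_ij|lt_ji]; first exact: Xact_xx_sorted.
have ne_ji : j != i by rewrite neq_ltn lt_ji.
rewrite (xx_swap beta ne_ji) rmorphB rmorphN Xact_const Xact_xx_sorted //.
have ne_sji : s j != s i by rewrite (inj_eq perm_inj).
by rewrite (xx_swap beta ne_sji).
Qed.

Lemma Xact1 p : Xact 1%g p = p.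
Proof.
apply: (@Xring_rmorph_eq (Xact 1%g) idfun) => [c|i j lt_ij] /=; first exact: Xact_const.
by rewrite Xact_xx ?neq_ltn ?lt_ij // !perm1.
Qed.

Lemma XactM s t p : Xact (s * t)%g p = Xact t (Xact s p).
Proof.
apply: (@Xring_rmorph_eq _ (Xact t \o Xact s)) => [c|i j lt_ij] /=; first by rewrite !Xact_const.
have ne_ij : i != j by rewrite neq_ltn lt_ij.
by rewrite !Xact_xx ?(inj_eq perm_inj) // !permM.
Qed.

Lemma Xact_is_Sn_kalg_action : is_Sn_kalg_action Xact.
Proof.
split=> [s|s|p|s t p]; last by rewrite XactM.
- by split=> [a b|a b||c]; rewrite ?rmorphD ?rmorphM ?rmorph1 ?Xact_const.
- by exists (Xact s^-1) => p; rewrite -XactM ?mulgV ?mulVg Xact1.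
- exact: Xact1.
Qed.

Lemma kalg_endo_eq (f : XR -> XR) (g : {rmorphism XR -> XR}) :
  kalg_endo f -> (forall c, g (Xconst n c) = Xconst n c) ->
  (forall i j : 'I_n, (i < j)%N -> f (xx beta i j) = g (xx beta i j)) ->
  f =1 g.
Proof.
move=> [fD fM f1 f_const] g_const eq_xx.
have f0 : f 0 = 0 by apply: (addrI (f 0)); rewrite -fD !addr0.
pose fR : {rmorphism XR -> XR} :=
  HB.pack f (GRing.isNmodMorphism.Build _ _ f (f0, fD))
    (GRing.isMonoidMorphism.Build _ _ f (f1, fM)).
by apply: (@Xring_rmorph_eq fR g) => [c|]; rewrite /= ?f_const ?g_const.
Qed.

Lemma Xact_inJ alpha s p : inJ beta alpha p -> inJ beta alpha (Xact s p).
Proof.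
move=> [c ->]; rewrite !rmorph_sum; apply: inJ_sum => i _.
rewrite !rmorph_sum; apply: inJ_sum => j _; rewrite !rmorph_sum; apply: inJ_sum => l _.
case: ifP => [/andP[lt_ij lt_jl]|_]; last by rewrite rmorph0; apply: inJ0.
have [ne_ij ne_jl ne_il] : [/\ i != j, j != l & i != l].
  by rewrite !neq_ltn lt_ij lt_jl (ltn_trans lt_ij lt_jl).
rewrite rmorphM /Jgen !rmorphB !rmorphM !rmorphD !Xact_const !Xact_xx //.
by apply/inJMl/inJ_Jgen; rewrite (inj_eq perm_inj).
Qed.

End PermutationAction.

Theorem proposition3p21 (k : comNzRingType) (beta alpha : k) (n : nat) (hn : (0 < n)%N) :
  exists act : {perm 'I_n} -> Xring k n -> Xring k n,
    [/\ (* (a) existence *)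
        is_Sn_kalg_action act,
        (forall (s : {perm 'I_n}) (i j : 'I_n), i != j ->
           act s (xx beta i j) = xx beta (s i) (s j)),
        (* (a) uniqueness *)
        (forall act' : {perm 'I_n} -> Xring k n -> Xring k n,
           is_Sn_kalg_action act' ->
           (forall (s : {perm 'I_n}) (i j : 'I_n), i != j ->
              act' s (xx beta i j) = xx beta (s i) (s j)) ->
           forall s p, act' s p = act s p),
        (* (b) J is invariant *)
        (forall s p, inJ beta alpha p -> inJ beta alpha (act s p)) &
        (* (b) hence the action descends to X / J (compatible with congruence mod J) *)
        (forall s p q, inJ beta alpha (p - q) -> inJ beta alpha (act s p - act s q))].
Proof.
exists (fun s => @Xact k beta n s); split.
- exact: Xact_is_Sn_kalg_action.
- exact: Xact_xx.
- move=> act' [act'_endo _ _ _] act'_xx s.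
  apply: (@kalg_endo_eq _ beta) => [|c|i j lt_ij]; first exact: act'_endo.
    exact: Xact_const.
  by rewrite act'_xx ?Xact_xx // neq_ltn lt_ij.
- exact: Xact_inJ.
- by move=> s p q; rewrite -rmorphB; apply: Xact_inJ.
Qed.
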